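(* Let $q$ be a nonzero complex number with $q^4\ne 1$ and let $\zeta,\zeta',\zeta''$ be nonzero complex numbers different from $\pm1$. Put $V=V(\zeta)$, $U=V(\zeta')$, $W=V(\zeta'')$. Then, as maps $V\otimes U\otimes W\to W\otimes U\otimes V$, \[(R_{\zeta',\zeta''}\otimes I_{V})(I_{U}\otimes R_{\zeta,\zeta''})(R_{\zeta,\zeta'}\otimes I_{W})=(I_{W}\otimes R_{\zeta,\zeta'})(R_{\zeta,\zeta''}\otimes I_{U})(I_{V}\otimes R_{\zeta',\zeta''}),\] and the same identity holds with $R'$ in place of $R$ throughout.
   Context: $V(\zeta)$ denotes the two-dimensional super vector space with basis $x$ (even), $y$ (odd) (it is the Kac module of $U_q(\mathfrak{sl}(1|1))$ with $W$-eigenvalue $\zeta$); write $x',y'$ and $x'',y''$ for the corresponding bases of $V(\zeta')$, $V(\zeta'')$. For nonzero $\sigma,\tau$, $R_{\sigma,\tau}:V(\sigma)\otimes V(\tau)\to V(\tau)\otimes V(\sigma)$ and $R'_{\sigma,\tau}$ are the even linear maps (with $x,y$ basis of $V(\sigma)$, $\tilde x,\tilde y$ basis of $V(\tau)$) \[R_{\sigma,\tau}:\ x\otimes\tilde x\mapsto \tilde x\otimes x,\ x\otimes\tilde y\mapsto \sigma\,\tilde y\otimes x,\ y\otimes\tilde x\mapsto \tau\,\tilde x\otimes y+(1-\sigma^2)\,\tilde y\otimes x,\ y\otimes\tilde y\mapsto-\sigma\tau\,\tilde y\otimes y,\] \[R'_{\sigma,\tau}:\ x\otimes\tilde x\mapsto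 -\sigma\tau\,\tilde x\otimes x,\ x\otimes\tilde y\mapsto (1-\tau^2)\,\tilde x\otimes y-\tau\,\tilde y\otimes x,\ y\otimes\tilde x\mapsto-\sigma\,\tilde x\otimes y,\ y\otimes\tilde y\mapsto\tilde y\otimes y.\] $I_X$ is the identity of $X$; tensor products of these even maps act factorwise on pure tensors of basis vectors. *)

From mathcomp Require Import all_boot all_order all_algebra all_field.
Set Implicit Arguments. Unset Strict Implicit. Unset Printing Implicit Defensive.
Import GRing.Theory Num.Theory.
Local Open Scope ring_scope.

(* Basis of V(zeta): false = x (even), true = y (odd). *)

(* Coefficient representation of an even linear map A (x) B -> C (x) D between
   tensor products of two 2-dim spaces: map2 a1 a2 b1 b2 = coefficient of the
   basis vector b1 (x) b2 in the image of a1 (x) a2. *)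
Definition map2 := bool -> bool -> bool -> bool -> algC.

Definition map3 := bool -> bool -> bool -> bool -> bool -> bool -> algC.

(* R_{sigma,tau} : V(sigma) (x) V(tau) -> V(tau) (x) V(sigma). *)
Definition Rmap (s t : algC) : map2 := fun a1 a2 b1 b2 =>
  match a1, a2, b1, b2 with
  | false, false, false, false => 1          (* x(x)x~ |-> x~(x)x *)
  | false, true,  true,  false => s          (* x(x)y~ |-> s y~(x)x *)
  | true,  false, false, true  => t          (* y(x)x~ |-> t x~(x)y + ... *)
  | true,  false, true,  false => 1 - s ^+ 2 (* ... + (1-s^2) y~(x)x *)
  | true,  true,  true,  true  => - (s * t)  (* y(x)y~ |-> -st y~(x)y *)
  | _, _, _, _ => 0
  end.

Definition R'map (s t : algC) : map2 := fun a1 a2 b1 b2 =>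
  match a1, a2, b1, b2 with
  | false, false, false, false => - (s * t)  (* x(x)x~ |-> -st x~(x)x *)
  | false, true,  false, true  => 1 - t ^+ 2 (* x(x)y~ |-> (1-t^2) x~(x)y + ... *)
  | false, true,  true,  false => - t        (* ... - t y~(x)x *)
  | true,  false, false, true  => - s        (* y(x)x~ |-> -s x~(x)y *)
  | true,  true,  true,  true  => 1          (* y(x)y~ |-> y~(x)y *)
  | _, _, _, _ => 0
  end.

Definition delta (a b : bool) : algC := if a == b then 1 else 0.

(* f (x) I  (even maps: no Koszul sign on pure basis tensors). *)
Definition tensorI (f : map2) : map3 := fun a1 a2 a3 b1 b2 b3 =>
  f a1 a2 b1 b2 * delta a3 b3.
Definition Itensor (f : map2) : map3 := fun a1 a2 a3 b1 b2 b3 =>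
  delta a1 b1 * f a2 a3 b2 b3.

(* Composition g o f (f applied first). *)
Definition comp3 (g f : map3) : map3 := fun a1 a2 a3 b1 b2 b3 =>
  \sum_(c1 : bool) \sum_(c2 : bool) \sum_(c3 : bool)
     f a1 a2 a3 c1 c2 c3 * g c1 c2 c3 b1 b2 b3.

Definition braid_identity (Rf : algC -> algC -> map2) (z z' z'' : algC) : Prop :=
  comp3 (tensorI (Rf z' z'')) (comp3 (Itensor (Rf z z'')) (tensorI (Rf z z')))
  = comp3 (Itensor (Rf z z')) (comp3 (tensorI (Rf z z'')) (Itensor (Rf z' z''))).

From mathcomp Require Import all_boot all_order all_algebra all_field.
From mathcomp Require Import ring.
From Stdlib Require Import FunctionalExtensionality.
Local Open Scope ring_scope.

(* Both sides are even maps between 8-dimensional spaces, so the braid identity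
   amounts to 64 equalities of matrix entries.  Each entry is a polynomial in
   z, z', z'' and the two sides agree as polynomials. *)

Lemma map3_ext (f g : map3) :
  (forall a1 a2 a3 b1 b2 b3, f a1 a2 a3 b1 b2 b3 = g a1 a2 a3 b1 b2 b3) ->
  f = g.
Proof.
by move=> fg; do 6 apply: functional_extensionality => ?; apply: fg.
Qed.

Lemma Rmap_braid (z z' z'' : algC) : braid_identity Rmap z z' z''.
Proof.
apply: map3_ext => a1 a2 a3 b1 b2 b3.
rewrite /comp3 !big_bool /tensorI /Itensor /delta.
by case: a1 a2 a3 b1 b2 b3 => [] [] [] [] [] [] /=; ring.
Qed.

Lemma R'map_braid (z z' z'' : algC) : braid_identity R'map z z' z''.
Proof.
apply: map3_ext => a1 a2 a3 b1 b2 b3.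
rewrite /comp3 !big_bool /tensorI /Itensor /delta.
by case: a1 a2 a3 b1 b2 b3 => [] [] [] [] [] [] /=; ring.
Qed.

Theorem theorem6p1 (q z z' z'' : algC) :
  q != 0 -> q ^+ 4 != 1 ->
  z != 0 -> z != 1 -> z != -1 ->
  z' != 0 -> z' != 1 -> z' != -1 ->
  z'' != 0 -> z'' != 1 -> z'' != -1 ->
  braid_identity Rmap z z' z'' /\ braid_identity R'map z z' z''.
Proof.
by move=> *; split; [exact: Rmap_braid | exact: R'map_braid].
Qed.
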